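(* Let $T$ be a finite rooted tree with root $P$ and exactly $n \ge 1$ non-root nodes, and set $k^* = \lfloor (n-1)/2 \rfloor$. Then $$\mathrm{IDI}(T) \le (1 + k^* )(n - k^* ).$$ This bound is attained by the following tree. Take a path $P \to p_1 \to \dots \to p_{k^*}$. Then attach $n - k^*$ leaves as children of $p_{k^*}$, or as children of $P$ if $k^* = 0$. More generally, for $0 \le k \le n-1$, let $T_k$ be the tree consisting of a path $P \to p_1 \to \dots \to p_k$ together with $n-k$ leaves attached as children of the last path node ($p_k$, or $P$ if $k=0$). Then $\mathrm{IDI}(T_k) = k(n-k) + (n-k) = (k+1)(n-k)$, and $k^*$ maximizes $(k+1)(n-k)$ over integers $0 \le k \le n-1$.
   Context: For a finite rooted tree $T$ with root $P$, a leaf is a node with no children. The Influence Dispersion Index is $\mathrm{IDI}(T) = \sum_{\ell \in L(T)} \mathrm{dist}(P,\ell)$, where $L(T)$ is the set of leaves of $T$ and $\mathrm{dist}(P,\ell)$ is the number of edges on the path from $P$ to $\ell$. The paper writes the maximizer as $k = \lfloor (n-1)/2 \rceil$, meaning $(n-1)/2$ rounded to an integer. Either rounding gives the same value of $(1+k)(n-k)$. *)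

From mathcomp Require Import all_boot.
Set Implicit Arguments. Unset Strict Implicit. Unset Printing Implicit Defensive.

Inductive rtree : Type := Node of seq rtree.

(* Total number of nodes (root included). *)
Fixpoint nnodes (t : rtree) : nat :=
  let: Node ts := t in (sumn (map nnodes ts)).+1.

Fixpoint leaf_depths (t : rtree) : seq nat :=
  match t with
  | Node [::] => [:: 0]
  | Node ts => map S (flatten (map leaf_depths ts))
  end.

Definition IDI (t : rtree) : nat := sumn (leaf_depths t).

Definition star (m : nat) : rtree := Node (nseq m (Node [::])).

Definition Tk (n k : nat) : rtree := iter k (fun t => Node [:: t]) (star (n - k)).

Definition kstar (n : nat) : nat := (n - 1)./2.

From mathcomp Require Import all_boot.
From Stdlib Require List.
From mathcomp Require Import zify.

Set Implicit Arguments.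
Unset Strict Implicit.
Unset Printing Implicit Defensive.

(* Let [t] be a rooted tree with [m] nodes, [L] leaves and
   height [h] (the largest root-leaf distance).  Every leaf lies at depth at
   most [h], so IDI t <= L * h.  A longest root-leaf path contains [h + 1]
   nodes, only one of which is a leaf, so L + h <= m.  Hence
   IDI t <= h * (m - h), and the elementary fact that a * (m - a) is largest
   at a = m/2 bounds this by (m/2) * (m - m/2).  With m = n + 1 and n >= 1
   this is exactly (1 + kstar n) * (n - kstar n), where kstar n = (n - 1)/2. *)

Lemma rtree_ind' (P : rtree -> Prop) :
  (forall ts, (forall u, List.In u ts -> P u) -> P (Node ts)) ->
  forall t, P t.
Proof.
move=> IH; fix F 1; case=> ts; apply: IH.
elim: ts => [|u us IHus] v /= => [[]|[<-|/IHus //]]; exact: F.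
Qed.

Fixpoint height (t : rtree) : nat :=
  let: Node ts := t in
  if ts is [::] then 0 else (foldr maxn 0 (map height ts)).+1.

Lemma sumn_add_max (I : Type) (s : seq I) (a b c : I -> nat) :
  (forall i, List.In i s -> a i + b i <= c i) ->
  sumn (map a s) + foldr maxn 0 (map b s) <= sumn (map c s).
Proof.
elim: s => //= i s IHs Habc.
have Hi := Habc i (or_introl erefl).
have Hs := IHs (fun j Hj => Habc j (or_intror Hj)).
lia.
Qed.

Lemma sumn_le_size_mul (s : seq nat) (h : nat) :
  all (fun d => d <= h) s -> sumn s <= size s * h.
Proof. elim: s => //= d s IHs /andP[Hd /IHs]; lia. Qed.

Lemma forest_leaf_depths_le (s : seq rtree) :
  (forall u, List.In u s -> all (fun d => d <= height u) (leaf_depths u)) ->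
  all (fun d => d <= foldr maxn 0 (map height s)) (flatten (map leaf_depths s)).
Proof.
elim: s => //= u s IHs IH; rewrite all_cat; apply/andP; split.
- apply: sub_all (IH u (or_introl erefl)) => d /= Hd.
  by rewrite leq_max Hd.
- apply: sub_all (IHs (fun v Hv => IH v (or_intror Hv))) => d /= Hd.
  by rewrite leq_max Hd orbT.
Qed.

Lemma leaf_depths_le_height (t : rtree) :
  all (fun d => d <= height t) (leaf_depths t).
Proof.
elim/rtree_ind': t => -[|u0 us] IH //.
by move: (forest_leaf_depths_le IH) => /=; rewrite all_map.
Qed.

(* Number of leaves plus height is at most the number of nodes: a longest
   root-leaf path meets the leaves only at its end. *)
Lemma leaves_add_height (t : rtree) :
  size (leaf_depths t) + height t <= nnodes t.
Proof.
elim/rtree_ind': t => -[|u0 us] IH //.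
have leaves_forest s : size (flatten (map leaf_depths s)) =
    sumn (map (fun u => size (leaf_depths u)) s).
  by rewrite size_flatten /shape -map_comp.
have := sumn_add_max IH; rewrite -leaves_forest /= size_map; lia.
Qed.

Lemma IDI_le_height (t : rtree) :
  IDI t <= height t * (nnodes t - height t).
Proof.
have Hsize := leaves_add_height t.
apply: leq_trans (sumn_le_size_mul (leaf_depths_le_height t)) _.
rewrite mulnC leq_mul2l; apply/orP; right; lia.
Qed.

Lemma mul_split_le_half (m a : nat) : a * (m - a) <= m./2 * (m - m./2).
Proof.
(* Write m = 2q + parity and compare a with q. *)
have := odd_double_half m; move: (odd m) m./2 => [] q <-;
  have [Ha|Ha] := leqP a q; nia.
Qed.

Lemma half_succ_kstar (n : nat) : 1 <= n ->
  (n.+1)./2 = 1 + kstar n /\ n.+1 - (n.+1)./2 = n - kstar n.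
Proof.
rewrite /kstar => Hn; have -> : n.+1 = (n - 1).+2 by lia.
by rewrite /= -[(n - 1).+2]addn2; split; lia.
Qed.

Lemma kstar_maximises (n k : nat) : 1 <= n ->
  (k + 1) * (n - k) <= (kstar n + 1) * (n - kstar n).
Proof.
move=> Hn; have [Hhalf Hrest] := half_succ_kstar Hn.
have := mul_split_le_half n.+1 k.+1; rewrite Hrest Hhalf.
by rewrite subSS addn1 [_ + 1]addnC.
Qed.

Definition hang (k : nat) (t : rtree) : rtree := iter k (fun t => Node [:: t]) t.

Lemma nnodes_hang (k : nat) (t : rtree) : nnodes (hang k t) = nnodes t + k.
Proof. by elim: k => [|k IHk] /=; rewrite ?addn0 // IHk addnS. Qed.

Lemma leaf_depths_hang (k : nat) (t : rtree) :
  leaf_depths (hang k t) = map (addn k) (leaf_depths t).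
Proof.
elim: k => [|k IHk] /=; first by rewrite map_id_in.
rewrite cats0 IHk -map_comp; by apply: eq_map => d /=; rewrite addSn.
Qed.

Lemma nnodes_star (m : nat) : nnodes (star m) = m.+1.
Proof. by rewrite /= map_nseq sumn_nseq mul1n. Qed.

Lemma leaf_depths_star (m : nat) : 0 < m -> leaf_depths (star m) = nseq m 1.
Proof. by case: m => //= m _; congr (_ :: _); elim: m => //= m ->. Qed.

Lemma nnodes_Tk (n k : nat) : k <= n -> nnodes (Tk n k) = n.+1.
Proof. by move=> Hk; rewrite [Tk n k]/(hang k _) nnodes_hang nnodes_star; lia. Qed.

(* T_k has n - k leaves, all at depth k + 1. *)
Lemma IDI_Tk (n k : nat) : k < n -> IDI (Tk n k) = (k + 1) * (n - k).
Proof.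
move=> Hk; rewrite /IDI [Tk n k]/(hang k _) leaf_depths_hang.
by rewrite leaf_depths_star ?subn_gt0 // map_nseq sumn_nseq addn1 mulnC.
Qed.

Theorem mainTheorem5 (n : nat) (hn : 1 <= n) :
  (* upper bound for every rooted tree with n non-root nodes *)
  (forall T : rtree, nnodes T = n.+1 ->
     IDI T <= (1 + kstar n) * (n - kstar n))
  (* the bound is attained by T_{k*} *)
  /\ nnodes (Tk n (kstar n)) = n.+1
  /\ IDI (Tk n (kstar n)) = (1 + kstar n) * (n - kstar n)
  (* the family T_k, 0 <= k <= n-1 *)
  /\ (forall k : nat, k <= n - 1 ->
        [/\ nnodes (Tk n k) = n.+1,
            IDI (Tk n k) = k * (n - k) + (n - k),
            k * (n - k) + (n - k) = (k + 1) * (n - k)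
          & (k + 1) * (n - k) <= (kstar n + 1) * (n - kstar n)]).
Proof.
have [Hhalf Hrest] := half_succ_kstar hn.
have Hkstar : kstar n < n by rewrite /kstar; lia.
split.
  move=> T HT; apply: leq_trans (IDI_le_height T) _.
  by rewrite HT -Hhalf -Hrest mul_split_le_half.
split; first by apply: nnodes_Tk; exact: ltnW.
split; first by rewrite IDI_Tk // addnC.
move=> k Hk; have Hkn : k < n by lia.
split.
- exact: nnodes_Tk (ltnW Hkn).
- by rewrite IDI_Tk // mulnDl mul1n.
- by rewrite mulnDl mul1n.
- exact: kstar_maximises.
Qed.
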